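(* Assume $abcd\neq0$. Let $(\omega_M)_{M\ge1}$ be points of $B_{in}$, let $\theta_M\in(0,\pi)$ be defined by $\cos\theta_M=x(\omega_M)$, and put $\theta'_M=\min\{\theta_M,\pi-\theta_M\}$. If $M\theta'_M\to\theta_*$ as $M\to\infty$ with $\theta_*\in(0,\infty)\setminus\pi\mathbb{Z}$, then \[\lim_{M\to\infty}\frac{\mathcal{E}_M(\omega_M)}{M}=\frac{1}{\sin^2\theta_*}\left(1-\frac{\sin2\theta_*}{2\theta_*}\right).\]
   Context: Setting: $C=\begin{bmatrix} a&b\\ c&d\end{bmatrix}$ a fixed $2\times2$ unitary matrix, $\Delta=\det C$, a fixed square root $\Delta^{1/2}$; for each $M\ge1$, $\Gamma_M=\{0,\dots,M-1\}$ and $E_M$ is the linear map on $\ell^2(\Gamma_M;\mathbb{C}^2)$ with $(E_M\varphi)(x)=P\varphi(x+1)+Q\varphi(x-1)$, $\varphi(-1)=\varphi(M)=0$, $P=\begin{bmatrix} a&b\\0&0\end{bmatrix}$, $Q=\begin{bmatrix}0&0\\c&d\end{bmatrix}$. For $\omega$ on the unit circle let $z=\Delta^{1/2}\omega$ and let $\varphi$ be the unique solution of $(z-E_M)\varphi=\delta_0|R\rangle$, $|R\rangle=(0,1)^\top$; the energy is $\mathcal{E}_M(\omega)=\sum_{n=0}^{M-1}\|\varphi(n)\|^2_{\mathbb{C}^2}$. Let $x(\omega)=\frac{\omega+\omega^{-1}}{2|a|}$ and $B_{in}=\{\omega:|\omega|=1,\ |x(\omega)|<1\}$. *)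

From HB Require Import structures.
From mathcomp Require Import all_boot all_order all_algebra.
From mathcomp Require Import complex.
From mathcomp Require Import all_classical all_reals all_analysis.
Set Implicit Arguments. Unset Strict Implicit. Unset Printing Implicit Defensive.
Import Order.TTheory GRing.Theory Num.Theory.
Local Open Scope ring_scope.

Section QW.
Variable R : realType.
Local Notation C := (complex R).

(* Entries of P = [[a,b],[0,0]] and Q = [[0,0],[c,d]] built from the coin U. *)
Definition Pent (U : 'M[C]_2) (i j : nat) : C :=
  if i == 0%N then U (inord 0) (inord j) else 0.
Definition Qent (U : 'M[C]_2) (i j : nat) : C :=
  if i == 1%N then U (inord 1) (inord j) else 0.

(* ell^2(Gamma_M; C^2) is identified with C^(2M): the coordinate k stands for
   site x = k %/ 2 and spin component i = k %% 2.  E_M as a 2M x 2M matrix: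
   (E_M phi)(x) = P phi(x+1) + Q phi(x-1), with phi(-1) = phi(M) = 0. *)
Definition walk_mx (U : 'M[C]_2) (M : nat) : 'M[C]_(M * 2) :=
  \matrix_(k, l)
    ((if (l %/ 2 == (k %/ 2).+1)%N then Pent U (k %% 2) (l %% 2) else 0) +
     (if ((l %/ 2).+1 == k %/ 2)%N then Qent U (k %% 2) (l %% 2) else 0)).

(* delta_0 |R>, |R> = (0,1)^T : coordinate k = 1 (site 0, component 1). *)
Definition src (M : nat) : 'cV[C]_(M * 2) := \col_k (((k : nat) == 1%N)%:R).

Definition resolvent_sol (U : 'M[C]_2) (M : nat) (z : C) : 'cV[C]_(M * 2) :=
  invmx (z%:M - walk_mx U M) *m src M.

Definition energy (U : 'M[C]_2) (s : C) (M : nat) (w : C) : R :=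
  let phi := resolvent_sol U M (s * w) in
  \sum_k ((complex.Re (phi k 0)) ^+ 2 + (complex.Im (phi k 0)) ^+ 2).

Definition xfun (U : 'M[C]_2) (w : C) : C := (w + w^-1) / (2 * `|U 0 0|).

Definition B_in (U : 'M[C]_2) (w : C) : Prop := `|w| = 1 /\ `|xfun U w| < 1.

Definition unitary2 (U : 'M[C]_2) : Prop :=
  U *m (map_mx (fun z : C => z^*) U)^T = 1%:M.

End QW.

(* Away from the source, (z - E_M) phi = delta_0 |R> is a two-term recurrence between
   neighbouring sites, and the boundary condition phi(M) = 0 forces phi(M-1) = (0, q).
   Solving backwards from the right end gives phi(M-1-k) = q B^k (0, 1) for the backward
   transfer map B.  Unitarity of the coin gives B determinant a/d and trace
   (det C + z^2)/(z d); rescaling by the unimodular mu = d/(s |a|) turns these into 1 and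
   2 cos theta, so that mu^k B^k (0, 1) are Chebyshev combinations of sin(k theta)/sin theta.
   This gives |phi(n)|^2 site by site, the source equation at x = 0 fixes |q|^2, and
   summing yields an exact formula for E_M(omega)/M, invariant under theta -> pi - theta.
   Its limit follows from M theta'_M -> theta_* and sin t / t -> 1. *)

From HB Require Import structures.
From mathcomp Require Import all_boot all_order all_algebra.
From mathcomp Require Import complex.
From mathcomp Require Import all_classical all_reals all_analysis.
From mathcomp Require Import ring lra zify.
Set Implicit Arguments. Unset Strict Implicit. Unset Printing Implicit Defensive.
Import Order.TTheory GRing.Theory Num.Theory.
Import numFieldNormedType.Exports.
Local Open Scope classical_set_scope.
Local Open Scope ring_scope.

Section Coordinates.
Variable V : nmodType.

Definition cvcoord (n : nat) (v : 'cV[V]_n) (l : nat) : V :=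
  oapp (fun i : 'I_n => v i 0) 0 (insub l).

Lemma cvcoordE (n : nat) (v : 'cV[V]_n) (i : 'I_n) : cvcoord v i = v i 0.
Proof. by rewrite /cvcoord valK. Qed.

Lemma cvcoord_pairs_eq0 (n : nat) (v : 'cV[V]_(n * 2)) :
  (forall k, (k < n)%N -> cvcoord v (2 * k) = 0 /\ cvcoord v (2 * k).+1 = 0) -> v = 0.
Proof.
move=> v_eq0; apply/matrixP => i j; rewrite (ord1 j) !mxE -cvcoordE.
move: (nat_of_ord i) (ltn_ord i) => l lt_l.
have [even_eq0 odd_eq0] := v_eq0 (l %/ 2)%N ltac:(lia).
by rewrite (divn_eq l 2) modn2 (mulnC (l %/ 2)%N); case: (odd l); rewrite ?addn0 ?addn1.
Qed.

End Coordinates.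

Lemma big_nat_pairs (V : nmodType) (n : nat) (f : nat -> V) :
  \sum_(0 <= l < n * 2) f l = \sum_(0 <= i < n) (f (2 * i)%N + f (2 * i).+1).
Proof.
elim: n => [|n IH]; first by rewrite mul0n !big_geq.
have -> : (n.+1 * 2 = (n * 2).+2)%N by lia.
rewrite !big_nat_recr //= IH -addrA; congr (_ + (f _ + f _)); lia.
Qed.

Lemma big_nat_pair_eq (V : nmodType) (n m : nat) (f : nat -> V) :
  \sum_(0 <= l < n * 2) (if (l %/ 2 == m)%N then f l else 0) =
  if (m < n)%N then f (2 * m)%N + f (2 * m).+1 else 0.
Proof.
rewrite -[(m < n)%N]/(0 <= m < n)%N.
rewrite -(big_nat1_eq +%R (fun i => f (2 * i)%N + f (2 * i).+1)) big_mkcond big_nat_pairs.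
apply: eq_big_nat => i _.
have -> : ((2 * i) %/ 2 = i)%N by lia.
have -> : ((2 * i).+1 %/ 2 = i)%N by lia.
by case: eqP; rewrite ?addr0.
Qed.

Section WalkRecurrence.
Variable R : realType.
Local Notation C := (complex R).
Variable U : 'M[C]_2.

Lemma walk_mulmxE (M : nat) (psi : 'cV[C]_(M * 2)) (i : 'I_(M * 2)) :
  (walk_mx U M *m psi) i 0 =
  if odd i then
    (if (i %/ 2 == 0)%N then 0 else
       U 1 0 * cvcoord psi (2 * (i %/ 2).-1) + U 1 1 * cvcoord psi (2 * (i %/ 2).-1).+1)
  else
    (if ((i %/ 2).+1 < M)%N then
       U 0 0 * cvcoord psi (2 * (i %/ 2).+1) + U 0 1 * cvcoord psi (2 * (i %/ 2).+1).+1
     else 0).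
Proof.
have ord0E : (inord 0 : 'I_2) = 0 by apply/val_inj; rewrite /= inordK.
have ord1E : (inord 1 : 'I_2) = 1 by apply/val_inj; rewrite /= inordK.
have mod2l k : ((2 * k) %% 2 = 0)%N by lia.
have mod2r k : ((2 * k).+1 %% 2 = 1)%N by lia.
rewrite !mxE; under eq_bigr do rewrite mxE mulrDl -cvcoordE.
rewrite big_split /=.
rewrite -(big_mkord xpredT (fun l => (if (l %/ 2 == (i %/ 2).+1)%N
  then Pent U (i %% 2) (l %% 2) else 0) * cvcoord psi l)).
rewrite -(big_mkord xpredT (fun l => (if ((l %/ 2).+1 == i %/ 2)%N
  then Qent U (i %% 2) (l %% 2) else 0) * cvcoord psi l)).
under eq_bigr do rewrite (fun_if (fun x => x * _)) mul0r.
rewrite big_nat_pair_eq !mod2l !mod2r /Pent /Qent ord0E ord1E modn2.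
case Hi: (odd i) => /=.
- rewrite !mul0r addr0 if_same add0r.
  have [->|i2_neq0] := eqVneq (i %/ 2)%N 0%N.
    by rewrite big1 // => l _; rewrite mul0r.
  rewrite -(prednK (n := (i %/ 2)%N)) ?lt0n //=.
  under eq_bigr do rewrite eqSS (fun_if (fun x => x * _)) mul0r.
  rewrite big_nat_pair_eq !mod2l !mod2r ord0E ord1E.
  suff -> : ((i %/ 2).-1 < M)%N by [].
  by have := ltn_ord i; rewrite (divn_eq i 2) modn2 Hi; lia.
- by rewrite big1 ?addr0 // => l _; case: ifP; rewrite ?mul0r.
Qed.

Lemma resolvent_recurrence (m : nat) (z r : C) (psi : 'cV[C]_(m.+1 * 2)) :
  (z%:M - walk_mx U m.+1) *m psi = r *: src R m.+1 ->
  (forall n, (n <= m)%N -> z * cvcoord psi (2 * n) =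
     if (n < m)%N then U 0 0 * cvcoord psi (2 * n.+1) + U 0 1 * cvcoord psi (2 * n.+1).+1
     else 0) /\
  (forall n, (n <= m)%N -> z * cvcoord psi (2 * n).+1 =
     if (n == 0)%N then r
     else U 1 0 * cvcoord psi (2 * n.-1) + U 1 1 * cvcoord psi (2 * n.-1).+1).
Proof.
move=> eq_psi; split=> n le_nm.
- have lt_nM : (2 * n < m.+1 * 2)%N by lia.
  have := congr1 (fun A : 'cV[C]_(m.+1 * 2) => A (Ordinal lt_nM) 0) eq_psi.
  rewrite mulmxBl mul_scalar_mx mxE [in X in _ + X]mxE walk_mulmxE !mxE /= -cvcoordE /=.
  rewrite oddM andFb.
  have -> : ((2 * n) %/ 2 = n)%N by lia.
  have -> : ((2 * n)%N == 1%N) = false by apply/negbTE; lia.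
  by rewrite mulr0 => /eqP; rewrite subr_eq0 ltnS => /eqP.
- have lt_nM : ((2 * n).+1 < m.+1 * 2)%N by lia.
  have := congr1 (fun A : 'cV[C]_(m.+1 * 2) => A (Ordinal lt_nM) 0) eq_psi.
  rewrite mulmxBl mul_scalar_mx mxE [in X in _ + X]mxE walk_mulmxE !mxE /= -cvcoordE /= oddM /=.
  have -> : ((2 * n).+1 %/ 2 = n)%N by lia.
  have [->|n0] := eqVneq n 0%N; first by rewrite mulr1 subr0.
  have -> : ((2 * n).+1 == 1)%N = false by apply/negbTE; lia.
  by rewrite mulr0 => /eqP; rewrite subr_eq0 => /eqP.
Qed.

End WalkRecurrence.

Lemma det_mx22 (F : comNzRingType) (A : 'M[F]_2) :
  \det A = A 0 0 * A 1 1 - A 0 1 * A 1 0.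
Proof.
rewrite (expand_det_row _ 0) !big_ord_recl big_ord0 /cofactor !det_mx11 !mxE addr0.
have -> : lift (0 : 'I_2) (0 : 'I_1) = 1 by apply/val_inj.
have -> : lift (1 : 'I_2) (0 : 'I_1) = 0 by apply/val_inj.
by rewrite /= expr0 mul1r expr1 mulN1r mulrN.
Qed.

Lemma unitmx_inj (F : fieldType) (n : nat) (A : 'M[F]_n) :
  (forall v : 'cV[F]_n, A *m v = 0 -> v = 0) -> A \in unitmx.
Proof.
move=> injA; rewrite -unitmx_tr -row_free_unit -kermx_eq0; apply/eqP/matrixP => i j.
have kerA : A *m (row i (kermx A^T))^T = 0.
  by rewrite -[A]trmxK -trmx_mul trmxK -row_mul mulmx_ker row0 trmx0.
by have := congr1 (fun v : 'cV[F]_n => v j 0) (injA _ kerA); rewrite !mxE.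
Qed.

Section BackwardTransfer.
Variables (F : fieldType) (a b c d z : F).

(* One step of the recurrence z p_n = a p_(n+1) + b q_(n+1),
   z q_(n+1) = c p_n + d q_n, solved for (p_n, q_n) from (p_(n+1), q_(n+1)). *)
Definition back_step (v : F * F) : F * F :=
  let u := (a * v.1 + b * v.2) / z in (u, (z * v.2 - c * u) / d).

Definition back_iter (k : nat) : F * F := iter k back_step (0, 1).

Definition back_trace : F := (a * d - b * c + z ^+ 2) / (z * d).
Definition back_det : F := a / d.

Hypotheses (z_neq0 : z != 0) (d_neq0 : d != 0).

Lemma back_step2 (v : F * F) :
  back_step (back_step v) =
  (back_trace * (back_step v).1 - back_det * v.1,
   back_trace * (back_step v).2 - back_det * v.2).
Proof.
by rewrite /back_step /back_trace /back_det /=; congr pair; field; rewrite d_neq0 z_neq0.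
Qed.

Variables (m : nat) (p q : nat -> F) (r : F).
Hypothesis rec_p : forall n, (n <= m)%N ->
  z * p n = if (n < m)%N then a * p n.+1 + b * q n.+1 else 0.
Hypothesis rec_q : forall n, (n <= m)%N ->
  z * q n = if (n == 0)%N then r else c * p n.-1 + d * q n.-1.

Lemma back_iter_sol k : (k <= m)%N ->
  p (m - k)%N = q m * (back_iter k).1 /\ q (m - k)%N = q m * (back_iter k).2.
Proof.
elim: k => [_|k IH lt_km].
  rewrite subn0 mulr1 mulr0; split=> //.
  by have /eqP := rec_p (leqnn m); rewrite ltnn mulf_eq0 (negbTE z_neq0) => /eqP.
have [IHp IHq] := IH (ltnW lt_km).
have Ep := rec_p (leq_subr k.+1 m).
have lt_mk : (m - k.+1 < m)%N by lia.
have Sk : ((m - k.+1).+1 = m - k)%N by lia.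
rewrite lt_mk Sk IHp IHq in Ep.
have p_k : p (m - k.+1)%N = q m * (back_iter k.+1).1.
  rewrite /back_iter iterS -/(back_iter k) /back_step /=.
  by apply: (mulfI z_neq0); rewrite Ep; field.
split=> //.
have Eq := rec_q (leq_subr k m).
have mk_neq0 : (m - k == 0)%N = false by apply/negbTE; lia.
have Pk : ((m - k).-1 = m - k.+1)%N by lia.
rewrite mk_neq0 Pk IHq p_k /back_iter iterS -/(back_iter k) /back_step /= in Eq *.
apply: (mulfI d_neq0).
have -> : d * q (m - k.+1)%N = z * (q m * (back_iter k).2)
    - c * (q m * ((a * (back_iter k).1 + b * (back_iter k).2) / z)).
  by rewrite Eq addrAC subrr add0r.
by field; rewrite d_neq0 z_neq0.
Qed.

Lemma back_iter_source : z * (q m * (back_iter m).2) = r.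
Proof.
have [_ <-] := back_iter_sol (leqnn m).
by rewrite subnn rec_q.
Qed.

End BackwardTransfer.

Section SineRecurrence.
Variable R : realType.
Local Notation C := (complex R).
Implicit Types (x t : R).

Lemma sin_rec x t : sin ((x + 2) * t) = 2 * cos t * sin ((x + 1) * t) - sin (x * t).
Proof.
have -> : (x + 2) * t = (x + 1) * t + t by ring.
have -> : x * t = (x + 1) * t - t by ring.
by rewrite sinD sinB; ring.
Qed.

Lemma sin_sqr_rec x t :
  sin (x * t) ^+ 2 + sin ((x - 1) * t) ^+ 2 - 2 * cos t * sin (x * t) * sin ((x - 1) * t)
  = sin t ^+ 2.
Proof.
have -> : (x - 1) * t = x * t - t by ring.
rewrite sinB; have := cos2Dsin2 (x * t); have := cos2Dsin2 t; nra.
Qed.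

Lemma sum_sin_mul_sin (n : nat) t :
  4 * sin t * \sum_(0 <= k < n) (sin (k%:R * t) * sin (k.+1%:R * t)) =
  2 * n%:R * cos t * sin t - sin ((2 * n)%:R * t).
Proof.
elim: n => [|n IH]; first by rewrite big_geq // muln0 mulr0n !(mulr0, mul0r) sin0 subr0.
rewrite big_nat_recr //= mulrDr IH.
have -> : n.+1%:R * t = n%:R * t + t by rewrite -addn1 natrD; ring.
have -> : (2 * n)%:R * t = n%:R * t + n%:R * t by rewrite natrM; ring.
have -> : (2 * n.+1)%:R * t = (n%:R * t + n%:R * t) + (t + t)
  by rewrite natrM -addn1 natrD; ring.
rewrite -addn1 natrD !sinD !cosD; apply/eqP; rewrite -subr_eq0; apply/eqP.
set X := sin (n%:R * t); set Y := cos (n%:R * t).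
transitivity (2 * cos t * sin t * (Y ^+ 2 + X ^+ 2 - 1)
              + 2 * X * Y * (cos t ^+ 2 + sin t ^+ 2 - 1)); first by ring.
by rewrite cos2Dsin2 [Y ^+ 2 + _]cos2Dsin2 !subrr !mulr0 addr0.
Qed.

Lemma sin_rec_solution t (u : nat -> C) : sin t != 0 ->
  (forall k, u k.+2 = (2 * cos t)%:C%C * u k.+1 - u k) ->
  forall k, u k = (sin (k%:R * t) / sin t)%:C%C * u 1%N
                  - (sin ((k%:R - 1) * t) / sin t)%:C%C * u 0%N.
Proof.
move=> st_neq0 u_rec.
pose P k := u k = (sin (k%:R * t) / sin t)%:C%C * u 1%N
                  - (sin ((k%:R - 1) * t) / sin t)%:C%C * u 0%N.
suff PS : forall k, P k /\ P k.+1 by move=> k; case: (PS k).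
elim=> [|k [IHk IHSk]].
  rewrite /P mulr0n mulr1n subrr sub0r !mul0r mulN1r mul1r sinN sin0 !mul0r mulNr.
  by rewrite divff // rmorphN1 rmorph1 mulN1r sub0r opprK mul1r subr0.
split=> //; move: IHk IHSk; rewrite /P u_rec => -> ->.
have S2 : k.+2%:R = k%:R + 2 :> R by rewrite -addn2 natrD.
have S1 : k.+1%:R = k%:R + 1 :> R by rewrite -addn1 natrD.
have coef x : sin ((x + 2) * t) / sin t =
    2 * cos t * (sin ((x + 1) * t) / sin t) - sin (x * t) / sin t.
  by rewrite sin_rec mulrBl mulrA.
have -> : k.+2%:R - 1 = (k%:R - 1) + 2 :> R by rewrite S2; ring.
have -> : k.+1%:R - 1 = (k%:R - 1) + 1 :> R by rewrite S1; ring.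
rewrite S2 S1 !coef (_ : k%:R - 1 + 1 = k%:R); last by ring.
by rewrite !rmorphB !rmorphM; ring.
Qed.

End SineRecurrence.

Section SquaredModulus.
Variable R : rcfType.
Implicit Types x y : R[i].

Definition sqrmod x : R := complex.Re x ^+ 2 + complex.Im x ^+ 2.

Lemma sqrmodE x : (sqrmod x)%:C%C = `|x| ^+ 2.
Proof. exact: add_Re2_Im2. Qed.

Lemma mulcJ_sqrmod x : x * x^*%C = (sqrmod x)%:C%C.
Proof. by rewrite sqrmodE sqr_normc. Qed.

Lemma sqrmodM x y : sqrmod (x * y) = sqrmod x * sqrmod y.
Proof. by apply: complexI; rewrite rmorphM /= !sqrmodE normrM exprMn. Qed.

Lemma sqrmodJ x : sqrmod x^*%C = sqrmod x.
Proof. by apply: complexI; rewrite !sqrmodE normcJ. Qed.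

Lemma sqrmodN x : sqrmod (- x) = sqrmod x.
Proof. by apply: complexI; rewrite !sqrmodE normrN. Qed.

Lemma sqrmodV x : sqrmod x^-1 = (sqrmod x)^-1.
Proof. by apply: complexI; rewrite fmorphV /= !sqrmodE normfV exprVn. Qed.

Lemma sqrmodX x k : sqrmod (x ^+ k) = sqrmod x ^+ k.
Proof. by apply: complexI; rewrite rmorphXn /= !sqrmodE normrX -!exprM mulnC. Qed.

Lemma sqrmodR (r : R) : sqrmod r%:C%C = r ^+ 2.
Proof. by rewrite /sqrmod /= expr0n addr0. Qed.

Lemma sqrmod1 : sqrmod 1 = 1.
Proof. by rewrite -[1]/((1 : R)%:C%C) sqrmodR expr1n. Qed.

Lemma sqrmod_ge0 x : 0 <= sqrmod x.
Proof. by rewrite addr_ge0 ?sqr_ge0. Qed.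

Lemma sqrmod_eq0 x : (sqrmod x == 0) = (x == 0).
Proof.
by rewrite -(inj_eq (@complexI R)) sqrmodE rmorph0 sqrf_eq0 normr_eq0.
Qed.

Lemma sqrmod_gt0 x : (0 < sqrmod x) = (x != 0).
Proof. by rewrite lt_def sqrmod_ge0 sqrmod_eq0 andbT. Qed.

Lemma sqrmod_scaleBR (y1 y0 : R) x :
  sqrmod (y1%:C%C * x - y0%:C%C) =
  (y1 * complex.Re x - y0) ^+ 2 + (y1 * complex.Im x) ^+ 2.
Proof. by case: x => x1 x2; rewrite /sqrmod /=; ring. Qed.

Lemma divR_addcJ x (k r : R) : r != 0 ->
  (x + k%:C%C * x^*%C) / r%:C%C =
  ((1 + k) * complex.Re x / r +i* ((1 - k) * complex.Im x / r))%C.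
Proof.
move=> r_neq0; have rC_neq0 : (r%:C%C : R[i]) != 0 by rewrite fmorph_eq0.
apply: (mulIf rC_neq0); rewrite mulfVK //; case: x => x1 x2.
by apply/eqP; rewrite eq_complex /=; apply/andP; split; apply/eqP; field.
Qed.

End SquaredModulus.

Arguments sqrmod {R}.

Section EnergyDensity.
Variable R : realType.
Implicit Types (al be t : R) (M : nat).

Definition energy_density al be t M : R :=
  (sin t ^+ 2 + be * cos t ^+ 2
     - be * (cos t * sin ((2 * M)%:R * t)) / (2 * (M%:R * sin t))) /
  (al * sin t ^+ 2 + be * sin (M%:R * t) ^+ 2).

Lemma sin_mulnBpi M t : sin (M%:R * (pi - t)) = - (-1) ^+ M * sin (M%:R * t).
Proof.
rewrite mulrBr sinB (mulr_natl pi) -[pi *+ M]add0r.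
rewrite (alternatingn (@sinDpi R)) (alternatingn (@cosDpi R)) sin0 cos0.
by rewrite mulr0 mul0r sub0r mulr1 mulNr.
Qed.

Lemma energy_densityBpi al be t M :
  energy_density al be (pi - t) M = energy_density al be t M.
Proof.
have sinBpi : sin (pi - t) = sin t by rewrite sinB sinpi cospi mul0r sub0r mulN1r opprK.
have cosBpi : cos (pi - t) = - cos t by rewrite cosB sinpi cospi mul0r addr0 mulN1r.
have sign2 k : ((-1) ^+ k) ^+ 2 = 1 :> R by rewrite -exprM mulnC exprM sqrrN !expr1n.
rewrite /energy_density sinBpi cosBpi !sin_mulnBpi sqrrN exprMn sqrrN sign2 mul1r.
by rewrite exprM sqrrN !expr1n mulN1r mulrN mulNr opprK.
Qed.

Lemma sin_neq0_notmulpi (t : R) : 0 < t -> (forall k : int, t != k%:~R * pi) -> sin t != 0.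
Proof.
move=> t_gt0 t_notmulpi.
have /andP[le_nt lt_tn] := truncn_itv (divr_ge0 (ltW t_gt0) (@pi_ge0 R)).
set n := Num.Def.truncn _ in le_nt lt_tn.
set r := t - n%:R * pi.
have r_ge0 : 0 <= r by rewrite /r subr_ge0 -ler_pdivlMr // pi_gt0.
have r_ltpi : r < pi.
  have : t < n.+1%:R * pi by rewrite -ltr_pdivrMr ?pi_gt0.
  by rewrite ltrBlDr -natr1 mulrDl mul1r addrC.
have t_eq : t = r + pi *+ n by rewrite /r mulr_natl subrK.
rewrite t_eq (alternatingn (@sinDpi R)) mulf_eq0 negb_or signr_eq0 /=.
have [r0|r_neq0] := eqVneq r 0.
  by move: (t_notmulpi n); rewrite t_eq r0 add0r -mulr_natl -pmulrn eqxx.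
by rewrite gt_eqF // sin_gt0_pi // lt_def r_neq0 r_ge0 r_ltpi.
Qed.

Lemma sin_div_cvg1 : sin h / h @[h --> (0 : R)^'] --> (1 : R).
Proof.
have d := @ex_derive _ _ _ _ _ _ _ (is_derive_sin (0 : R)).
have v := @derive_val _ _ _ _ _ _ _ (is_derive_sin (0 : R)).
move: d; rewrite /derivable /derive in v *; rewrite v cos0.
have -> : (fun h : R => h^-1 *: ((sin \o shift 0) h%:A - sin 0)) = (fun h => sin h / h).
  by apply/funext => h; rewrite /= sin0 subr0 addr0 /GRing.scale /= mulr1 mulrC.
by [].
Qed.

Lemma cvg0_of_nat_scaled (t : nat -> R) (l : R) :
  (fun M => M%:R * t M) @ \oo --> l -> t @ \oo --> 0.
Proof.
move=> Mt_cvg.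
have inv_cvg0 : (fun M => (M%:R : R)^-1) @ \oo --> 0.
  by rewrite -cvg_shiftS; exact: cvg_harmonic.
have Mt_div_cvg : (fun M => M%:R * t M * M%:R^-1) @ \oo --> l * 0 := cvgM Mt_cvg inv_cvg0.
have t_eq : {near \oo, (fun M => M%:R * t M * M%:R^-1) =1 t}.
  by exists 1%N => // M /= M_gt0; rewrite mulrAC mulfV ?mul1r // pnatr_eq0 -lt0n.
rewrite mulr0 in Mt_div_cvg.
by apply: (cvg_trans (near_eq_cvg t_eq)); exact: Mt_div_cvg.
Qed.

Lemma nat_scaled_sin_cvg (t : nat -> R) (l : R) : (forall M, 0 < t M) ->
  (fun M => M%:R * t M) @ \oo --> l -> (fun M => M%:R * sin (t M)) @ \oo --> l.
Proof.
move=> t_gt0 Mt_cvg.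
have sinc_cvg1 : (fun M => sin (t M) / t M) @ \oo --> (1 : R).
  have := (cvgr_dnbhsP (fun h : R => sin h / h) 0 1).1 sin_div_cvg1 t.
  by apply; split=> [M|]; [exact: lt0r_neq0 | exact: cvg0_of_nat_scaled Mt_cvg].
have -> : (fun M => M%:R * sin (t M)) = (fun M => M%:R * t M * (sin (t M) / t M)).
  by apply/funext => M; field; exact: lt0r_neq0.
by rewrite -(mulr1 l); exact: cvgM.
Qed.

Lemma energy_density_cvg al be (ts : R) (t : nat -> R) :
  0 < be -> 0 < ts -> sin ts != 0 -> (forall M, 0 < t M) ->
  (fun M => M%:R * t M) @ \oo --> ts ->
  (fun M => energy_density al be (t M) M) @ \oo -->
    (sin ts ^+ 2)^-1 * (1 - sin (2 * ts) / (2 * ts)).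
Proof.
move=> be_gt0 ts_gt0 sints_neq0 t_gt0 Mt_cvg.
have t_cvg0 := cvg0_of_nat_scaled Mt_cvg.
have Msint_cvg := nat_scaled_sin_cvg t_gt0 Mt_cvg.
have sin_cvg (f : nat -> R) (l : R) : f @ \oo --> l -> (fun M => sin (f M)) @ \oo --> sin l.
  by move=> f_cvg; exact: continuous_cvg _ (@continuous_sin R l) f_cvg.
have sint_cvg0 : (fun M => sin (t M)) @ \oo --> 0 by rewrite -sin0; exact: sin_cvg.
have cost_cvg1 : (fun M => cos (t M)) @ \oo --> (1 : R).
  by rewrite -cos0; exact: continuous_cvg _ (@continuous_cos R 0) t_cvg0.
have sqr_cvg (f : nat -> R) (l : R) : f @ \oo --> l -> (fun M => f M ^+ 2) @ \oo --> l ^+ 2.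
  by move=> f_cvg; rewrite expr2; under eq_fun do rewrite expr2; exact: cvgM.
have num_cvg : (fun M => sin (t M) ^+ 2 + be * cos (t M) ^+ 2
      - be * (cos (t M) * sin ((2 * M)%:R * t M)) / (2 * (M%:R * sin (t M))))
    @ \oo --> 0 ^+ 2 + be * 1 ^+ 2 - be * (1 * sin (2 * ts)) / (2 * ts).
  under eq_fun do rewrite natrM -(mulrA 2).
  apply: cvgB.
    by apply: cvgD; [exact: sqr_cvg sint_cvg0 | exact: cvgMl_tmp (sqr_cvg _ _ cost_cvg1)].
  have sin2_cvg := sin_cvg _ _ (cvgMl_tmp (a := 2) Mt_cvg).
  apply: cvgM; first by apply: cvgMl_tmp; apply: cvgM; [exact: cost_cvg1 | exact: sin2_cvg].
  apply: cvgV; first by rewrite mulf_neq0 // ?pnatr_eq0 // gt_eqF.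
  exact: cvgMl_tmp.
have den_cvg : (fun M => al * sin (t M) ^+ 2 + be * sin (M%:R * t M) ^+ 2)
    @ \oo --> al * 0 ^+ 2 + be * sin ts ^+ 2.
  apply: cvgD; first exact: cvgMl_tmp (sqr_cvg _ _ sint_cvg0).
  exact: cvgMl_tmp (sqr_cvg _ _ (sin_cvg _ _ Mt_cvg)).
have den_neq0 : al * 0 ^+ 2 + be * sin ts ^+ 2 != 0.
  by rewrite expr0n mulr0 add0r mulf_neq0 ?expf_neq0 // gt_eqF.
have -> : (sin ts ^+ 2)^-1 * (1 - sin (2 * ts) / (2 * ts)) =
    (0 ^+ 2 + be * 1 ^+ 2 - be * (1 * sin (2 * ts)) / (2 * ts)) /
    (al * 0 ^+ 2 + be * sin ts ^+ 2).
  by rewrite expr0n mulr0 !add0r expr1n mulr1 !mul1r; field; rewrite sints_neq0 !gt_eqF.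
apply: cvgM; [exact: num_cvg | exact: cvgV den_neq0 den_cvg].
Qed.

End EnergyDensity.

Section WalkEnergy.
Variable R : realType.
Local Notation C := (complex R).
Variables (U : 'M[C]_2) (s w : C) (th : R).
Hypothesis unitaryU : unitary2 U.
Hypothesis s_sqr : s ^+ 2 = \det U.
Hypothesis abcd_neq0 : U 0 0 * U 0 1 * U 1 0 * U 1 1 != 0.
Hypothesis norm_w : `|w| = 1.
Hypothesis th_gt0_ltpi : 0 < th < pi.
Hypothesis cos_th : (cos th)%:C%C = xfun U w.

Local Notation a := (U 0 0).
Local Notation b := (U 0 1).
Local Notation c := (U 1 0).
Local Notation d := (U 1 1).
Local Notation alpha := (sqrmod a).
Local Notation beta := (sqrmod b).
Local Notation ra := (Num.sqrt alpha).
Local Notation z := (s * w).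

Lemma a_neq0 : a != 0.
Proof. by move: abcd_neq0; rewrite !mulf_eq0 !negb_or => /andP[/andP[/andP[]]]. Qed.

Lemma d_neq0 : d != 0.
Proof. by move: abcd_neq0; rewrite !mulf_eq0 !negb_or => /andP[]. Qed.

Lemma unitary_rows (i j : 'I_2) :
  U i 0 * (U j 0)^*%C + U i 1 * (U j 1)^*%C = (i == j)%:R.
Proof.
have := congr1 (fun A : 'M[C]_2 => A i j) unitaryU.
rewrite !mxE !big_ord_recl big_ord0 addr0 !mxE.
by have -> : lift ord0 ord0 = (1 : 'I_2) by apply/val_inj.
Qed.

Lemma d_conjE : d = \det U * a^*%C.
Proof.
have r00 : a * a^*%C + b * b^*%C = 1 by have := unitary_rows 0 0.
have r10 : c * a^*%C + d * b^*%C = 0 by have := unitary_rows 1 0.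
rewrite det_mx22; apply/eqP; rewrite -subr_eq0; apply/eqP.
have -> : d - (a * d - b * c) * a^*%C
    = - d * (a * a^*%C + b * b^*%C - 1) + b * (c * a^*%C + d * b^*%C) by ring.
by rewrite r00 r10 subrr; ring.
Qed.

Lemma c_conjE : c = - \det U * b^*%C.
Proof.
have r00 : a * a^*%C + b * b^*%C = 1 by have := unitary_rows 0 0.
have r10 : c * a^*%C + d * b^*%C = 0 by have := unitary_rows 1 0.
rewrite det_mx22; apply/eqP; rewrite -subr_eq0; apply/eqP.
have -> : c - - (a * d - b * c) * b^*%C
    = a * (c * a^*%C + d * b^*%C) - c * (a * a^*%C + b * b^*%C - 1) by ring.
by rewrite r00 r10 subrr; ring.
Qed.

Lemma sqrmod_row0 : alpha + beta = 1.
Proof. by apply: complexI; rewrite rmorphD /= -!mulcJ_sqrmod unitary_rows. Qed.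

Lemma sqrmod_det : sqrmod (\det U) = 1.
Proof.
have : sqrmod c + sqrmod d = 1.
  by apply: complexI; rewrite rmorphD /= -!mulcJ_sqrmod unitary_rows.
by rewrite c_conjE d_conjE !sqrmodM sqrmodN !sqrmodJ -mulrDr addrC sqrmod_row0 mulr1.
Qed.

Lemma sqrmod_s : sqrmod s = 1.
Proof.
have /eqP : sqrmod s ^+ 2 = 1 by rewrite -sqrmodX s_sqr sqrmod_det.
rewrite sqrf_eq1 => /orP[/eqP //|/eqP s_eqN1].
by have := sqrmod_ge0 s; rewrite s_eqN1; lra.
Qed.

Lemma sqrmod_w : sqrmod w = 1.
Proof. by apply: complexI; rewrite sqrmodE norm_w expr1n. Qed.

Lemma sqrmod_z : sqrmod z = 1.
Proof. by rewrite sqrmodM sqrmod_s sqrmod_w mulr1. Qed.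

Lemma s_neq0 : s != 0.
Proof. by rewrite -sqrmod_gt0 sqrmod_s. Qed.

Lemma w_neq0 : w != 0.
Proof. by rewrite -sqrmod_gt0 sqrmod_w. Qed.

Lemma z_neq0 : z != 0.
Proof. by rewrite -sqrmod_gt0 sqrmod_z. Qed.

Lemma ra_gt0 : 0 < ra.
Proof. by rewrite sqrtr_gt0 sqrmod_gt0 a_neq0. Qed.

Lemma norm_a : `|a| = ra%:C%C.
Proof. by rewrite normc_def. Qed.

Lemma invw_conj : w^-1 = w^*%C.
Proof.
by apply: (mulfI w_neq0); rewrite mulfV ?w_neq0 // mulcJ_sqrmod sqrmod_w.
Qed.

Lemma cos_thE : cos th = complex.Re w / ra.
Proof.
apply: complexI; rewrite cos_th /xfun norm_a invw_conj addcJ.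
rewrite rmorphM rmorphV ?unitfE /= ?gt_eqF ?ra_gt0 //.
by field; rewrite fmorph_eq0 gt_eqF // ra_gt0.
Qed.

Let nonzeroE := (fmorph_eq0, gt_eqF ra_gt0, s_neq0, w_neq0, d_neq0).

(* [mu ^+ 2 * (a / d) = 1] because [d a = det U |a|^2 = s^2 |a|^2]. *)
Let mu : C := d / (s * ra%:C%C).

Lemma mu_trace : mu * back_trace a b c d z = 2 * (cos th)%:C%C.
Proof.
rewrite cos_th /xfun norm_a /mu /back_trace -det_mx22 -s_sqr.
by field; rewrite !nonzeroE.
Qed.

Lemma mu_det : mu ^+ 2 * back_det a d = 1.
Proof.
have da : d * a = \det U * (ra%:C%C) ^+ 2.
  by rewrite {1}d_conjE -mulrA (mulrC _ a) mulcJ_sqrmod -rmorphXn sqr_sqrtr ?sqrmod_ge0.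
have detn : \det U != 0 by rewrite -sqrmod_gt0 sqrmod_det.
have -> : mu ^+ 2 * back_det a d = d * a / (s ^+ 2 * (ra%:C%C) ^+ 2).
  by rewrite /mu /back_det; field; rewrite !nonzeroE.
by rewrite da s_sqr; field; rewrite !nonzeroE detn.
Qed.

Lemma sqrmod_mu : sqrmod mu = 1.
Proof.
rewrite /mu sqrmodM sqrmodV sqrmodM sqrmod_s sqrmodR sqr_sqrtr ?sqrmod_ge0 // mul1r.
by rewrite d_conjE sqrmodM sqrmod_det sqrmodJ mul1r mulfV // gt_eqF // sqrmod_gt0 a_neq0.
Qed.

Local Notation h := (back_iter a b c d z).

Let X1 : C := mu * (h 1).1.
Let X2 : C := mu * (h 1).2.

Lemma sqrmod_X1 : sqrmod X1 = beta.
Proof.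
rewrite /X1 /back_iter /back_step /= mulr0 add0r mulr1.
by rewrite sqrmodM sqrmod_mu mul1r sqrmodM sqrmodV sqrmod_z invr1 mulr1.
Qed.

Lemma X2E : X2 = (w + beta%:C%C * w^*%C) / ra%:C%C.
Proof.
rewrite /X2 /back_iter /back_step /= mulr0 add0r !mulr1.
have -> : c * (b / z) = - s ^+ 2 * beta%:C%C / z.
  by rewrite c_conjE -s_sqr -mulcJ_sqrmod; field; rewrite !nonzeroE.
by rewrite /mu -invw_conj; field; rewrite !nonzeroE.
Qed.

Lemma ReX2 : complex.Re X2 = (1 + beta) * cos th.
Proof. by rewrite X2E divR_addcJ ?gt_eqF ?ra_gt0 //= cos_thE mulrA. Qed.

Lemma ImX2 : complex.Im X2 = ra * complex.Im w.
Proof.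
rewrite X2E divR_addcJ ?gt_eqF ?ra_gt0 //=.
have -> : 1 - beta = ra ^+ 2 by rewrite sqr_sqrtr ?sqrmod_ge0 // -sqrmod_row0 addrK.
by field; rewrite gt_eqF ?ra_gt0.
Qed.

Lemma sin_th_neq0 : sin th != 0.
Proof. exact/lt0r_neq0/sin_gt0_pi. Qed.

Lemma back_iter_sin k :
  mu ^+ k * (h k).1 = (sin (k%:R * th) / sin th)%:C%C * X1 /\
  mu ^+ k * (h k).2 =
    (sin (k%:R * th) / sin th)%:C%C * X2 - (sin ((k%:R - 1) * th) / sin th)%:C%C.
Proof.
have scaled_rec n (x2 x1 x0 : C) :
    x2 = back_trace a b c d z * x1 - back_det a d * x0 ->
    mu ^+ n.+2 * x2 = (2 * cos th)%:C%C * (mu ^+ n.+1 * x1) - mu ^+ n * x0.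
  move=> ->; transitivity ((mu * back_trace a b c d z) * (mu ^+ n.+1 * x1)
                           - (mu ^+ 2 * back_det a d) * (mu ^+ n * x0)).
    by rewrite !exprS; ring.
  by rewrite mu_trace mu_det mul1r rmorphM rmorph_nat.
have h_rec (n : nat) := back_step2 a b c z_neq0 d_neq0 (h n).
have rec1 (n : nat) := scaled_rec n _ _ _ (congr1 fst (h_rec n)).
have rec2 (n : nat) := scaled_rec n _ _ _ (congr1 snd (h_rec n)).
rewrite (sin_rec_solution (u := fun n => mu ^+ n * (h n).1) sin_th_neq0 rec1 k).
rewrite (sin_rec_solution (u := fun n => mu ^+ n * (h n).2) sin_th_neq0 rec2 k).
by rewrite /= expr1 expr0 !mul1r -/X1 -/X2 mulr0 subr0 mulr1.
Qed.

Lemma sqrmod_back_iter_scaled k (v : C) : sqrmod (mu ^+ k * v) = sqrmod v.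
Proof. by rewrite sqrmodM sqrmodX sqrmod_mu expr1n mul1r. Qed.

Lemma Im_w_sqr : complex.Im w ^+ 2 = 1 - alpha * cos th ^+ 2.
Proof.
have Re_w : complex.Re w = ra * cos th by rewrite cos_thE mulrC divfK // gt_eqF ?ra_gt0.
by rewrite -sqrmod_w [sqrmod w]/sqrmod Re_w exprMn sqr_sqrtr ?sqrmod_ge0 //; ring.
Qed.

Lemma sqrmod_back_iter2 k :
  sqrmod (h k).2 = (alpha * sin th ^+ 2 + beta * sin (k.+1%:R * th) ^+ 2) / sin th ^+ 2.
Proof.
rewrite -(sqrmod_back_iter_scaled k) (back_iter_sin k).2 sqrmod_scaleBR ReX2 ImX2.
have -> : k.+1%:R * th = (k%:R - 1 + 2) * th by rewrite -addn1 natrD; congr (_ * _); ring.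
rewrite sin_rec (_ : k%:R - 1 + 1 = k%:R); last by ring.
have sn2 := sin_sqr_rec k%:R th.
have be_al : beta = 1 - alpha by rewrite -sqrmod_row0 addrAC subrr add0r.
rewrite !exprMn Im_w_sqr sqr_sqrtr ?sqrmod_ge0 // be_al.
set s1 := sin (k%:R * th) in sn2 *; set s0 := sin ((k%:R - 1) * th) in sn2 *.
apply/eqP; rewrite -subr_eq0; apply/eqP.
transitivity (alpha * (s1 ^+ 2 + s0 ^+ 2 - 2 * cos th * s1 * s0 - sin th ^+ 2) / sin th ^+ 2).
  by field; exact: sin_th_neq0.
by rewrite sn2 subrr mulr0 mul0r.
Qed.

Lemma sqrmod_back_iter k :
  sqrmod (h k).1 + sqrmod (h k).2 =
  1 + 2 * beta * cos th * sin (k%:R * th) * sin (k.+1%:R * th) / sin th ^+ 2.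
Proof.
rewrite sqrmod_back_iter2 -(sqrmod_back_iter_scaled k) (back_iter_sin k).1.
rewrite sqrmodM sqrmodR sqrmod_X1.
have sn2 := sin_sqr_rec k.+1%:R th.
rewrite (_ : k.+1%:R - 1 = k%:R) in sn2; last by rewrite -addn1 natrD addrK.
have al_be : alpha = 1 - beta by rewrite -sqrmod_row0 addrK.
rewrite al_be; set s1 := sin (k%:R * th) in sn2 *; set s2 := sin (k.+1%:R * th) in sn2 *.
apply/eqP; rewrite -subr_eq0; apply/eqP.
transitivity (beta * (s2 ^+ 2 + s1 ^+ 2 - 2 * cos th * s2 * s1 - sin th ^+ 2) / sin th ^+ 2).
  by field; exact: sin_th_neq0.
by rewrite sn2 subrr mulr0 mul0r.
Qed.

Lemma energy_denom_gt0 (x : R) : 0 < alpha * sin th ^+ 2 + beta * sin x ^+ 2.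
Proof.
apply: ltr_pwDl; last by rewrite mulr_ge0 ?sqrmod_ge0 ?sqr_ge0.
by rewrite mulr_gt0 ?sqrmod_gt0 ?a_neq0 // exprn_gt0 // sin_gt0_pi.
Qed.

Lemma back_iter2_neq0 k : (h k).2 != 0.
Proof.
rewrite -sqrmod_gt0 sqrmod_back_iter2 divr_gt0 ?energy_denom_gt0 //.
by rewrite exprn_gt0 // sin_gt0_pi.
Qed.

Lemma resolvent_unit m : z%:M - walk_mx U m.+1 \in unitmx.
Proof.
apply: unitmx_inj => psi psi_ker.
have /resolvent_recurrence[rec_p rec_q] : (z%:M - walk_mx U m.+1) *m psi = 0 *: src R m.+1.
  by rewrite scale0r.
have := back_iter_source z_neq0 d_neq0 rec_p rec_q.
move/eqP; rewrite mulf_eq0 (negbTE z_neq0) mulf_eq0 (negbTE (back_iter2_neq0 m)) orbF => /eqP q_m.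
apply: cvcoord_pairs_eq0 => k lt_km.
have km : (k <= m)%N by rewrite -ltnS.
have := back_iter_sol z_neq0 d_neq0 rec_p rec_q (leq_subr k m).
by rewrite subKn // q_m !mul0r.
Qed.

Lemma energy_back_iter m :
  energy U s m.+1 w =
  sin th ^+ 2 / (alpha * sin th ^+ 2 + beta * sin (m.+1%:R * th) ^+ 2)
  * \sum_(0 <= k < m.+1) (sqrmod (h k).1 + sqrmod (h k).2).
Proof.
set phi := resolvent_sol U m.+1 z.
have phi_eq : (z%:M - walk_mx U m.+1) *m phi = 1 *: src R m.+1.
  by rewrite scale1r /phi /resolvent_sol mulKVmx // resolvent_unit.
have [rec_p rec_q] := resolvent_recurrence phi_eq.
set q := cvcoord phi (2 * m).+1.
have sqrmod_q : sqrmod q =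
    sin th ^+ 2 / (alpha * sin th ^+ 2 + beta * sin (m.+1%:R * th) ^+ 2).
  have := congr1 sqrmod (back_iter_source z_neq0 d_neq0 rec_p rec_q).
  rewrite sqrmodM sqrmod_z mul1r sqrmodM sqrmod1 sqrmod_back_iter2 => q_eq.
  have D_neq0 := lt0r_neq0 (energy_denom_gt0 (m.+1%:R * th)).
  apply: (mulIf (x := (alpha * sin th ^+ 2 + beta * sin (m.+1%:R * th) ^+ 2) / sin th ^+ 2)).
    by apply: mulf_neq0 => //; rewrite invr_eq0 expf_neq0 ?sin_th_neq0.
  by rewrite q_eq; field; rewrite sin_th_neq0 D_neq0.
rewrite -sqrmod_q; transitivity (\sum_(0 <= l < m.+1 * 2) sqrmod (cvcoord phi l)).
  by rewrite big_mkord; apply: eq_bigr => i _; rewrite cvcoordE.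
rewrite big_nat_pairs big_nat_rev mulr_sumr; apply: eq_big_nat => k /andP[_ lt_km].
have := back_iter_sol z_neq0 d_neq0 rec_p rec_q (k := k) ltac:(lia).
by rewrite add0n subSS => -[-> ->]; rewrite -/q sqrmodM [sqrmod (q * _)]sqrmodM -mulrDr.
Qed.

Lemma energyE m : energy U s m.+1 w / m.+1%:R = energy_density alpha beta th m.+1.
Proof.
have D_neq0 := lt0r_neq0 (energy_denom_gt0 (m.+1%:R * th)).
rewrite energy_back_iter; under eq_big_nat do rewrite sqrmod_back_iter.
rewrite big_split /= sumr_const_nat subn0.
rewrite (eq_big_nat _ _ (F2 := fun k => 2 * beta * cos th / sin th ^+ 2
                                 * (sin (k%:R * th) * sin (k.+1%:R * th)))); last first.
  by move=> k _; ring.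
have sum_eq : \sum_(0 <= k < m.+1) (sin (k%:R * th) * sin (k.+1%:R * th)) =
    (2 * m.+1%:R * cos th * sin th - sin ((2 * m.+1)%:R * th)) / (4 * sin th).
  by rewrite -sum_sin_mul_sin; field; exact: sin_th_neq0.
rewrite -mulr_sumr sum_eq /energy_density -[1 *+ m.+1]/(m.+1%:R).
by field; rewrite sin_th_neq0 D_neq0 addrC natr1 pnatr_eq0.
Qed.

End WalkEnergy.

Unset Implicit Arguments.

Theorem mainTheorem12 (R : realType) (U : 'M[complex R]_2) (s : complex R)
  (w : nat -> complex R) (theta : nat -> R) (theta_s : R) :
  unitary2 U ->
  s ^+ 2 = \det U ->
  U 0 0 * U 0 1 * U 1 0 * U 1 1 != 0 ->
  (forall M : nat, (0 < M)%N -> B_in U (w M)) ->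
  (forall M : nat, (0 < M)%N ->
     0 < theta M < pi /\ (cos (theta M))%:C%C = xfun U (w M)) ->
  0 < theta_s ->
  (forall k : int, theta_s != k%:~R * pi) ->
  (fun M : nat => M%:R * Num.min (theta M) (pi - theta M)) @ \oo --> theta_s ->
  (fun M : nat => energy U s M (w M) / M%:R) @ \oo -->
    (sin theta_s ^+ 2)^-1 * (1 - sin (2 * theta_s) / (2 * theta_s)).
Proof.
move=> unitaryU s_sqr abcd_neq0 w_in theta_spec ts_gt0 ts_notmulpi Mt_cvg.
(* [t] agrees with [min theta (pi - theta)] except at the irrelevant index 0. *)
pose t M := if M is 0 then pi / 2 else Num.min (theta M) (pi - theta M).
have t_gt0 M : 0 < t M.
  case: M => [|M] /=; first by rewrite divr_gt0 ?pi_gt0.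
  by have [/andP[th_gt0 th_ltpi] _] := theta_spec M.+1 isT; rewrite lt_min th_gt0 subr_gt0.
have Mt_cvg' : (fun M => M%:R * t M) @ \oo --> theta_s.
  by rewrite (_ : (fun M => _) = (fun M => M%:R * Num.min (theta M) (pi - theta M))) //;
    apply/funext => -[|M]; rewrite ?mul0r.
have b_neq0 : U 0 1 != 0 by move: abcd_neq0; rewrite !mulf_eq0 !negb_or => /andP[/andP[/andP[]]].
have energy_eq : {near \oo, (fun M => energy_density (sqrmod (U 0 0)) (sqrmod (U 0 1)) (t M) M)
                   =1 (fun M => energy U s M (w M) / M%:R)}.
  exists 1%N => // -[//|m] _ /=.
  have [th_range cos_th] := theta_spec m.+1 isT.
  rewrite (energyE unitaryU s_sqr abcd_neq0 (w_in m.+1 isT).1 th_range cos_th).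
  by rewrite /Num.min; case: ifP => _; rewrite ?energy_densityBpi.
apply: (cvg_trans (near_eq_cvg energy_eq)).
apply: energy_density_cvg t_gt0 Mt_cvg' => //; first by rewrite sqrmod_gt0.
exact: sin_neq0_notmulpi.
Qed.
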